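(* Let $\Gamma$ be a finite connected $4$-valent graph of girth at least $5$ and let $g$ be an automorphism of $\Gamma$. Then $$2|F(\Gamma,g)|+4|V_1(\Gamma,g)|+3|V_2(\Gamma,g)|+|V_4(\Gamma,g)|\le|V\Gamma|.$$
   Context: For an automorphism $g$ of a $4$-valent graph $\Gamma$: $A(\Gamma,g)$ is the set of edges $\{a,b\}$ with $a^g=a$ and $b^g=b$; $F(\Gamma,g)$ is the set of edges $\{a,b\}$ with $a^g=b$ and $b^g=a$, $a\neq b$. $\Gamma[g]$ is the subgraph with edge set $A(\Gamma,g)$ and vertex set the vertices incident to edges of $A(\Gamma,g)$; its vertices have valency $1$, $2$ or $4$ in $\Gamma[g]$, and $V_i(\Gamma,g)$ is the set of vertices of $\Gamma[g]$ of valency $i$ in $\Gamma[g]$, for $i\in\{1,2,4\}$. *)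

From mathcomp Require Import all_boot perm.
Set Implicit Arguments. Unset Strict Implicit. Unset Printing Implicit Defensive.

Section Graphs.
Variable T : finType.

Definition simple_graph (e : rel T) : Prop := symmetric e /\ irreflexive e.

Definition regular (e : rel T) (k : nat) : Prop :=
  forall v : T, #|[set w | e v w]| = k.

Definition connected (e : rel T) : Prop := forall x y : T, connect e x y.

Definition girth_ge (e : rel T) (n : nat) : Prop :=
  forall c : seq T, path.cycle e c -> uniq c -> 3 <= size c -> n <= size c.

Definition is_graph_aut (e : rel T) (g : {perm T}) : Prop :=
  forall x y : T, e (g x) (g y) = e x y.

Definition edges (e : rel T) : {set {set T}} :=
  [set [set a; b] | a in T, b in T & e a b].

Definition A_edges (e : rel T) (g : {perm T}) : {set {set T}} :=
  [set [set a; b] | a in T, b in T & [&& e a b, g a == a & g b == b]].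

Definition F_edges (e : rel T) (g : {perm T}) : {set {set T}} :=
  [set [set a; b] | a in T, b in T & [&& e a b, a != b, g a == b & g b == a]].

Definition val_in_fix (e : rel T) (g : {perm T}) (v : T) : nat :=
  #|[set x in A_edges e g | v \in x]|.

(* V_i(Γ,g): vertices of Γ[g] (i.e. incident to an edge of A(Γ,g))
   of valency i in Γ[g]; for i >= 1 being of valency i implies being a vertex of Γ[g] *)
Definition V_i (e : rel T) (g : {perm T}) (i : nat) : {set T} :=
  [set v | (0 < val_in_fix e g v) && (val_in_fix e g v == i)].

End Graphs.

From mathcomp Require Import all_boot perm zify.
Set Implicit Arguments. Unset Strict Implicit. Unset Printing Implicit Defensive.

(* A charging argument: every vertex receives total charge at most 1.  A vertex
   of V_i is charged once itself and once at each of its at least 4 - i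
   neighbours not fixed by g (4 - i >= 3 for i = 1, >= 2 for i = 2), and each
   edge of F charges its two ends.  A moved vertex u is charged at most once:
   two fixed neighbours v, w of u would close the 4-cycle v u w (g u), and if
   u lies on a flipped edge {u, g u}, a fixed neighbour v of u would close the
   triangle v u (g u); both are excluded by girth at least 5. *)

Lemma card_set_sum (I : finType) (P : pred I) :
  #|[set i | P i]| = \sum_i (P i : nat).
Proof. by rewrite -sum1dep_card big_mkcond; apply: eq_bigr => i _; case: (P i). Qed.

Lemma sum_mem_card (I : finType) (A : {set I}) : \sum_i (i \in A : nat) = #|A|.
Proof. by rewrite -card_set_sum cardsE. Qed.

Lemma double_count (I J : finType) (A : {set I}) (P : I -> J -> bool) :
  \sum_j #|[set i in A | P i j]| = \sum_(i in A) #|[set j | P i j]|.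
Proof.
under eq_bigr do rewrite card_set_sum.
rewrite exchange_big [RHS]big_mkcond; apply: eq_bigr => i _ /=.
rewrite card_set_sum; case: (i \in A) => /=; last exact: big1.
by apply: eq_bigr.
Qed.

Lemma perm_moved (T : finType) (g : {perm T}) u : g u != u -> g (g u) != g u.
Proof. by apply: contraNneq => /perm_inj ->. Qed.

Section Charging.
Variables (T : finType) (e : rel T) (g : {perm T}).
Hypotheses (e_simple : simple_graph e) (e_reg : regular e 4).
Hypotheses (e_girth : girth_ge e 5) (g_aut : is_graph_aut e g).

Lemma edge_sym x y : e x y = e y x.
Proof. by case: e_simple => + _; apply. Qed.

Lemma edge_irr x : e x x = false.
Proof. by case: e_simple => _; apply. Qed.

Lemma no_triangle a b c : e a b -> e b c -> e c a -> uniq [:: a; b; c] -> False.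
Proof.
move=> ab bc ca abc; have := @e_girth [:: a; b; c].
by rewrite /= ab bc ca => /(_ isT abc isT).
Qed.

Lemma no_square a b c d :
  e a b -> e b c -> e c d -> e d a -> uniq [:: a; b; c; d] -> False.
Proof.
move=> ab bc cd da abcd; have := @e_girth [:: a; b; c; d].
by rewrite /= ab bc cd da => /(_ isT abcd isT).
Qed.

Lemma fixed_nbr_img v u : g v = v -> e v u -> e v (g u).
Proof. by move=> gv vu; rewrite -gv g_aut. Qed.

Lemma fixed_neq_moved x y : g x = x -> g y != y -> x != y.
Proof. by move=> gx; apply: contraNneq => <-; rewrite gx. Qed.

Lemma fixed_nbr_moved_uniq u : g u != u -> #|[set v | (g v == v) && e v u]| <= 1.
Proof.
move=> gu; apply/card_le1_eqP => v w.
rewrite !inE => /andP[/eqP gv vu] /andP[/eqP gw wu].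
apply/eqP/negPn/negP => wv; have ggu := perm_moved gu.
apply: (@no_square v u w (g u)) => //; first by rewrite edge_sym.
- by rewrite fixed_nbr_img // edge_sym.
- by rewrite edge_sym fixed_nbr_img // edge_sym.
rewrite /= !inE !negb_or (eq_sym v w) wv (eq_sym u w) (eq_sym u (g u)) gu.
by rewrite !(fixed_neq_moved gv) ?(fixed_neq_moved gw).
Qed.

Lemma flip_end_no_fixed_nbr u v : e u (g u) -> g u != u -> g v = v -> ~~ e v u.
Proof.
move=> ugu gu gv; apply/negP => vu.
apply: (@no_triangle v u (g u)) => //; first by rewrite edge_sym fixed_nbr_img // edge_sym.
by rewrite /= !inE negb_or !(fixed_neq_moved gv) ?perm_moved // eq_sym gu.
Qed.

Lemma V_iP i v : v \in V_i e g i -> [/\ g v = v, 0 < i & val_in_fix e g v = i].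
Proof.
rewrite inE => /andP[vpos /eqP vi]; split; rewrite -?vi //.
move: vpos => /card_gt0P[x]; rewrite inE => /andP[/imset2P[a b _]].
by rewrite inE => /andP[_ /and3P[_ /eqP ga /eqP gb]] -> /set2P[]->.
Qed.

Lemma fixed_nbrs_le_val v :
  g v = v -> #|[set w | e v w & g w == w]| <= val_in_fix e g v.
Proof.
move=> gv; rewrite -(@card_in_imset _ _ (fun w => [set v; w])).
  apply: subset_leq_card; apply/subsetP => x /imsetP[w]; rewrite inE => /andP[vw gw] ->.
  by rewrite inE set21 andbT; apply/imset2P; exists v w; rewrite // inE vw gv eqxx gw.
move=> w1 w2; rewrite !inE => /andP[vw1 _] _ /setP/(_ w1).
rewrite !inE eqxx orbT => /esym/orP[/eqP w1v|/eqP//].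
by rewrite w1v edge_irr in vw1.
Qed.

Definition moved_nbrs v := [set w | e v w & g w != w].

Lemma card_moved_nbrs i v : v \in V_i e g i -> 4 <= #|moved_nbrs v| + i.
Proof.
case/V_iP => gv _ vi; have := cardsID [set w | g w == w] [set w | e v w].
have -> : [set w | e v w] :&: [set w | g w == w] = [set w | e v w & g w == w].
  by apply/setP => w; rewrite !inE.
have -> : [set w | e v w] :\: [set w | g w == w] = moved_nbrs v.
  by apply/setP => w; rewrite !inE andbC.
by rewrite e_reg; have := fixed_nbrs_le_val gv; rewrite vi; lia.
Qed.

Lemma F_edgesP x u : x \in F_edges e g -> u \in x ->
  [/\ x = [set u; g u], e u (g u) & g u != u].
Proof.
move=> /imset2P[a b _]; rewrite inE => /andP[_ /and4P[ab anb /eqP ga /eqP gb]] ->.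
by case/set2P=> ->; rewrite ?ga ?gb ?ab 1?setUC 1?edge_sym ?ab // eq_sym.
Qed.

Lemma card_F_edges_at u : #|[set x in F_edges e g | u \in x]| <= 1.
Proof.
apply/card_le1_eqP => x y; rewrite !inE => /andP[xF ux] /andP[yF uy].
by case: (F_edgesP xF ux) => -> _ _; case: (F_edgesP yF uy) => -> _ _.
Qed.

Lemma card_F_edge x : x \in F_edges e g -> #|x| = 2.
Proof.
by move=> /imset2P[a b _]; rewrite inE => /andP[_ /and4P[_ anb _ _]] ->; rewrite cards2 anb.
Qed.

Definition fixed_charge u :=
  (u \in V_i e g 1) + (u \in V_i e g 2) + (u \in V_i e g 4).
Definition nbr_charge u :=
  #|[set v in V_i e g 1 :|: V_i e g 2 | u \in moved_nbrs v]|.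
Definition flip_charge u := #|[set x in F_edges e g | u \in x]|.

Lemma fixed_charge_le1 u : fixed_charge u <= 1.
Proof. by rewrite /fixed_charge !inE; case: (val_in_fix e g u) => [|[|[|[|[]]]]]. Qed.

Lemma charges_fixed u : g u = u -> nbr_charge u = 0 /\ flip_charge u = 0.
Proof.
move=> gu; split; apply/eqP; rewrite cards_eq0; apply/eqP/setP => x; rewrite !inE.
  by rewrite gu eqxx !andbF.
by apply/negP => /andP[xF /(F_edgesP xF)[_ _]]; rewrite gu eqxx.
Qed.

Lemma charges_moved u :
  g u != u -> fixed_charge u = 0 /\ nbr_charge u + flip_charge u <= 1.
Proof.
move=> gu; have notV i : (u \in V_i e g i) = false.
  by apply: contraNF gu => /V_iP[-> _ _].
split; first by rewrite /fixed_charge !notV.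
have nbr_le : nbr_charge u <= #|[set v | (g v == v) && e v u]|.
  apply/subset_leq_card/subsetP => v; rewrite [in X in X -> _]inE => /andP[/setUP vV].
  by rewrite !inE => /andP[-> _]; rewrite andbT; case: vV => /V_iP[-> _ _].
have [F0|/card_gt0P[x]] := posnP (flip_charge u).
  by rewrite F0 addn0; apply: leq_trans nbr_le (fixed_nbr_moved_uniq gu).
rewrite inE => /andP[xF /(F_edgesP xF)[_ ugu _]].
suff -> : nbr_charge u = 0 by exact: card_F_edges_at.
apply/eqP; rewrite -leqn0; apply: leq_trans nbr_le _; rewrite leqn0 cards_eq0.
apply/eqP/setP => v; rewrite !inE.
by case: (boolP (g v == v)) => //= /eqP gv; apply/negbTE/flip_end_no_fixed_nbr.
Qed.

Lemma charge_le1 u : fixed_charge u + nbr_charge u + flip_charge u <= 1.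
Proof.
have [/eqP gu|gu] := boolP (g u == u).
  by case: (charges_fixed gu) => -> ->; rewrite !addn0 fixed_charge_le1.
by case: (charges_moved gu) => -> le1; rewrite add0n.
Qed.

Lemma sum_nbr_charge :
  3 * #|V_i e g 1| + 2 * #|V_i e g 2| <= \sum_u nbr_charge u.
Proof.
rewrite /nbr_charge (double_count _ (fun v u => u \in moved_nbrs v)).
have disj12 : [disjoint V_i e g 1 & V_i e g 2].
  by apply/pred0P => v /=; rewrite !inE; case: val_in_fix => [|[|[]]].
rewrite (eq_bigl [predU V_i e g 1 & V_i e g 2]) => [|v]; last by rewrite !inE.
rewrite bigU //=; apply: leq_add; rewrite mulnC -sum_nat_const; apply: leq_sum => v.
all: by rewrite cardsE => /card_moved_nbrs; lia.
Qed.

Lemma sum_flip_charge : \sum_u flip_charge u = 2 * #|F_edges e g|.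
Proof.
rewrite /flip_charge (double_count _ (fun (x : {set T}) u => u \in x)) mulnC -sum_nat_const.
by apply: eq_bigr => x /card_F_edge; rewrite cardsE.
Qed.

End Charging.

Theorem lemma4p3 (T : finType) (e : rel T) (g : {perm T}) :
  simple_graph e -> regular e 4 -> connected e -> girth_ge e 5 ->
  is_graph_aut e g ->
  2 * #|F_edges e g| + 4 * #|V_i e g 1| + 3 * #|V_i e g 2| + #|V_i e g 4|
    <= #|T|.
Proof.
move=> e_simple e_reg _ e_girth g_aut.
have total : \sum_u (fixed_charge e g u + nbr_charge e g u + flip_charge e g u) <= #|T|.
  by rewrite -sum1_card leq_sum // => u _; apply: charge_le1.
move: total; rewrite !big_split /= !sum_mem_card sum_flip_charge.
have := sum_nbr_charge g e_simple e_reg.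
by move: (\sum_u _) #|V_i e g 1| #|V_i e g 2| #|V_i e g 4| #|F_edges e g|; lia.
Qed.
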